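(* Let $(S,|\cdot|)$ be a finite metric space with $n\ge3$ points, $t\ge 1$, $G'=(S,E')$ a $t$-spanner for $S$, and $G=(S,E)$ the graph obtained from $G'$ by the construction in the context with $f=1$. Let $F\subseteq E$ be a matching in $G$ (i.e., $(S,F)$ has maximum degree at most $1$). Let $p,q\in S$ and let $P'$ be a shortest path between $p$ and $q$ in $G'$. Suppose that at least one edge of $P'$ belongs to $F$ and that $P'$ has at least two edges. Then $G\setminus F$ contains a walk between $p$ and $q$ whose length is at most $3|P'|$, where $|P'|$ is the sum of the weights of the edges of $P'$.
   Context: For a finite metric space $(S,|\cdot|)$, $K_S$ denotes the complete graph on $S$ with edge weights $|pq|$; all graphs on $S$ have edge weights $|pq|$. For a set $F$ of edges, $X\setminus F$ is the graph with the same vertex set as $X$ and edge set $E_X\setminus F$. A graph $G'=(S,E')$ is a $t$-spanner for $S$ if the shortest-path distance in $G'$ satisfies $\delta_{G'}(p,q)\le t|pq|$ for all $p,q$. The length of a walk is the sum of its edge weights. Construction (general $f$ with $1\le f\le (n-1)/2$): for each edge $\{a,b\}\in E'$, list the points of $S\setminus\{a,b\}$ as $c_1,\dots,c_{n-2}$ in non-decreasing order of $|ac_i|+|c_ib|$ (ties broken arbitrarily) and let $C_{ab}=\{c_1,\dots,c_{2f-1}\}$; then $G=(S,E)$ with $E=E'\cup\{\{a,c\},\{c,b\}:\{a,b\}\in E',\ c\in C_{ab}\}$. For $f=1$, $C_{ab}$ consists of a single point minimizing $|ac|+|cb|$ over $c\in S\setminus\{a,b\}$. *)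

From mathcomp Require Import all_boot all_order all_algebra.
Set Implicit Arguments. Unset Strict Implicit. Unset Printing Implicit Defensive.
Import Order.TTheory GRing.Theory Num.Theory.
Local Open Scope ring_scope.

Section Defs.
Variables (R : realFieldType) (T : finType).

Definition is_metric (d : T -> T -> R) : Prop :=
  [/\ forall x, d x x = 0,
      forall x y, x != y -> 0 < d x y,
      forall x y, d x y = d y x &
      forall x y z, d x z <= d x y + d y z].

Definition simple_graph (e : rel T) : Prop :=
  (forall x, ~~ e x x) /\ (forall x y, e x y = e y x).

Definition walk (e : rel T) (p q : T) (s : seq T) : bool :=
  path e p s && (last p s == q).

Definition wlen (d : T -> T -> R) (p : T) (s : seq T) : R :=
  \sum_(w <- pairmap d p s) w.

(* Shortest-path distance is attained by a walk (finite graph), so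
   delta_G(p,q) <= t |pq| iff some walk from p to q has length <= t |pq|. *)
Definition is_spanner (d : T -> T -> R) (e : rel T) (t : R) : Prop :=
  forall p q, exists s, walk e p q s /\ wlen d p s <= t * d p q.

Definition shortest_path (d : T -> T -> R) (e : rel T) (p q : T) (s : seq T)
  : Prop :=
  [/\ walk e p q s, uniq (p :: s) &
      forall s', walk e p q s' -> wlen d p s <= wlen d p s'].

(* C is a valid choice, for f = 1, of the set C_ab = {C a b} for every edge
   {a,b} of E' : C a b is a point of S \ {a,b} minimizing |ac| + |cb|
   (ties broken arbitrarily, but one choice per unordered edge). *)
Definition valid_choice (d : T -> T -> R) (E' : rel T) (C : T -> T -> T)
  : Prop :=
  forall a b, E' a b ->
    [/\ C a b = C b a, C a b != a, C a b != b &
        forall c, c != a -> c != b -> d a (C a b) + d (C a b) b <= d a c + d c b].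

Definition construct (E' : rel T) (C : T -> T -> T) : rel T :=
  fun x y => E' x y ||
    [exists a, exists b, E' a b &&
       [|| (x == a) && (y == C a b), (x == C a b) && (y == a),
           (x == C a b) && (y == b) | (x == b) && (y == C a b)]].

Definition matching_in (E F : rel T) : Prop :=
  [/\ forall x y, F x y = F y x,
      forall x y, F x y -> E x y &
      forall x y z, F x y -> F x z -> y = z].

Definition remove_edges (E F : rel T) : rel T := fun x y => E x y && ~~ F x y.

Definition walk_uses (F : rel T) (p : T) (s : seq T) : bool :=
  has (fun xy => F xy.1 xy.2) (zip (p :: s) s).

End Defs.

From mathcomp Require Import all_boot all_order all_algebra.
From mathcomp Require Import lra.
Set Implicit Arguments. Unset Strict Implicit. Unset Printing Implicit Defensive.
Import Order.TTheory GRing.Theory Num.Theory.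
Local Open Scope ring_scope.

(* A matched edge ab of P' is replaced by the detour a, c_ab, b, which avoids F
   because F is a matching.  Since c_ab minimises |ac| + |cb|, comparing it with
   a path neighbour x of the edge gives |a c_ab| + |c_ab b| <= |ab| + 2|bx|, and
   the edge bx is unmatched.  Charging each matched edge to the path edge after
   it yields the factor 3.  The only matched edge without a successor is the
   last one; if its predecessor is already charged (pattern matched, unmatched,
   matched), comparing both detours with the center of the middle edge still
   fits.  A path consisting of one matched edge is the only exception. *)

Section Walks.
Variables (R : realFieldType) (T : finType) (d : T -> T -> R) (e : rel T).

Definition reach_within (u v : T) (L : R) : Prop :=
  exists2 W, walk e u v W & wlen d u W <= L.

Lemma wlen_cons u v s : wlen d u (v :: s) = d u v + wlen d v s.
Proof. by rewrite /wlen /= big_cons. Qed.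

Lemma wlen_cat u s1 s2 :
  wlen d u (s1 ++ s2) = wlen d u s1 + wlen d (last u s1) s2.
Proof. by rewrite /wlen pairmap_cat big_cat. Qed.

Lemma reach_within_refl u : reach_within u u 0.
Proof. by exists [::]; rewrite /walk /wlen /= ?eqxx ?big_nil. Qed.

Lemma reach_within_le u v L L' :
  L <= L' -> reach_within u v L -> reach_within u v L'.
Proof. by move=> le_LL' [W hW le_WL]; exists W; rewrite // (le_trans le_WL). Qed.

Lemma reach_within_cons u v w L :
  e u v -> reach_within v w L -> reach_within u w (d u v + L).
Proof.
move=> euv [W /andP[pW lW] le_WL]; exists (v :: W); first by rewrite /walk /= euv pW.
by rewrite wlen_cons lerD2l.
Qed.

Lemma reach_within_cat u v w L1 L2 :
  reach_within u v L1 -> reach_within v w L2 -> reach_within u w (L1 + L2).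
Proof.
move=> [W1 /andP[pW1 /eqP lW1] le1] [W2 /andP[pW2 lW2] le2].
exists (W1 ++ W2); first by rewrite /walk cat_path last_cat lW1 pW1 pW2.
by rewrite wlen_cat lW1 lerD.
Qed.

Lemma reach_within_edge u v : e u v -> reach_within u v (d u v).
Proof. by move=> euv; rewrite -[d u v]addr0; apply/reach_within_cons/reach_within_refl. Qed.

End Walks.

Lemma metric_ge0 (R : realFieldType) (T : finType) (d : T -> T -> R) :
  is_metric d -> forall x y, 0 <= d x y.
Proof.
case=> d0 dpos _ _ x y; have [->|nxy] := eqVneq x y; first by rewrite d0.
exact/ltW/dpos.
Qed.

Definition single_matched_edge (T : finType) (F : rel T) (v : T) (s : seq T) :=
  if s is [:: y] then F v y else false.

Section Detours.
Variables (R : realFieldType) (T : finType) (d : T -> T -> R).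
Variables (E' : rel T) (C : T -> T -> T) (F : rel T).
Hypothesis d_metric : is_metric d.
Hypothesis C_valid : valid_choice d E' C.
Hypothesis F_matching : matching_in (construct E' C) F.

Local Notation G := (remove_edges (construct E' C) F).
Local Notation reach := (reach_within d G).

Lemma construct_of_base x y : E' x y -> construct E' C x y.
Proof. by rewrite /construct => ->. Qed.

Lemma construct_to_center a b : E' a b -> construct E' C a (C a b).
Proof.
move=> eab; apply/orP; right; apply/existsP; exists a; apply/existsP; exists b.
by rewrite eab !eqxx.
Qed.

Lemma construct_from_center a b : E' a b -> construct E' C (C a b) b.
Proof.
move=> eab; apply/orP; right; apply/existsP; exists a; apply/existsP; exists b.
by rewrite eab !eqxx !orbT.
Qed.

Lemma matched_sym x y : F x y = F y x.
Proof. by case: F_matching. Qed.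

Lemma matched_partner_uniq x y z : F x y -> F x z -> y = z.
Proof. by case: F_matching => _ _; apply. Qed.

Lemma matched_partner_uniq_l x y z : F y x -> F z x -> y = z.
Proof. by rewrite !(matched_sym _ x); apply: matched_partner_uniq. Qed.

Lemma matched_next_unmatched a b x : F a b -> x != a -> ~~ F b x.
Proof.
rewrite matched_sym => Fba xa; apply/negP => /(matched_partner_uniq Fba) ax.
by rewrite ax eqxx in xa.
Qed.

Lemma G_of_base x y : E' x y -> ~~ F x y -> G x y.
Proof. by move=> exy nFxy; rewrite /remove_edges construct_of_base. Qed.

Lemma G_to_center a b : E' a b -> ~~ F a (C a b) -> G a (C a b).
Proof. by move=> eab nF; rewrite /remove_edges construct_to_center. Qed.

Lemma G_from_center a b : E' a b -> ~~ F (C a b) b -> G (C a b) b.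
Proof. by move=> eab nF; rewrite /remove_edges construct_from_center. Qed.

Lemma to_center_unmatched a b : E' a b -> F a b -> ~~ F a (C a b).
Proof.
move=> eab Fab; apply/negP => /(matched_partner_uniq Fab) eq_b.
by case: (C_valid eab) => _ _; rewrite -eq_b eqxx.
Qed.

Lemma from_center_unmatched a b : E' a b -> F a b -> ~~ F (C a b) b.
Proof.
move=> eab Fab; apply/negP => /(matched_partner_uniq_l Fab) eq_a.
by case: (C_valid eab) => _; rewrite -eq_a eqxx.
Qed.

Lemma center_min a b x : E' a b -> x != a -> x != b ->
  d a (C a b) + d (C a b) b <= d a x + d x b.
Proof. by move=> eab; case: (C_valid eab) => _ _ _; apply. Qed.

Lemma reach_around_matched a b : E' a b -> F a b ->
  reach a b (d a (C a b) + d (C a b) b).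
Proof.
move=> eab Fab; apply: reach_within_cat; apply: reach_within_edge.
  exact/G_to_center/to_center_unmatched.
exact/G_from_center/from_center_unmatched.
Qed.

Lemma reach_matched_unmatched a b x :
  E' a b -> F a b -> E' b x -> ~~ F b x -> x != a -> x != b ->
  reach a x (3 * (d a b + d b x)).
Proof.
move=> eab Fab ebx nFbx xa xb.
have := reach_within_cat (reach_around_matched eab Fab)
  (reach_within_edge d (G_of_base ebx nFbx)).
apply: reach_within_le.
have := center_min eab xa xb; have [_ _ dsym dtri] := d_metric.
have := dtri a b x; have := dsym x b; have := metric_ge0 d_metric a b; lra.
Qed.

Lemma reach_unmatched_matched u a b :
  E' u a -> ~~ F u a -> E' a b -> F a b -> u != a -> u != b ->
  reach u b (3 * (d u a + d a b)).
Proof.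
move=> eua nFua eab Fab ua ub.
have := reach_within_cons (G_of_base eua nFua) (reach_around_matched eab Fab).
apply: reach_within_le.
have := center_min eab ua ub; have [_ _ dsym dtri] := d_metric.
have := dtri u a b; have := dsym a u; have := metric_ge0 d_metric a b; lra.
Qed.

Lemma reach_matched_unmatched_matched u a b x :
  E' u a -> F u a -> E' a b -> ~~ F a b -> E' b x -> F b x ->
  uniq [:: u; a; b; x] -> reach u x (3 * (d u a + d a b + d b x)).
Proof.
move=> eua Fua eab nFab ebx Fbx.
rewrite /= !inE !negb_or !andbT => /and3P[/and3P[ua ub ux] /andP[ab ax] bx].
have [_ _ dsym dtri] := d_metric; have dge0 := metric_ge0 d_metric.
have [_ Ca Cb _] := C_valid eab.
have [Cu|Cu] := eqVneq (C a b) u.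
  have Gub : G u b.
    rewrite -Cu G_from_center //; apply/negP; rewrite Cu => /(matched_partner_uniq Fua) eq_ab.
    by rewrite eq_ab eqxx in ab.
  have := reach_within_cons Gub (reach_around_matched ebx Fbx).
  apply: reach_within_le.
  have := center_min ebx ab ax; have := dtri u a b; have := dtri a b x.
  have := dsym b a; have := dge0 u a; have := dge0 a b; have := dge0 b x; lra.
have [Cx|Cx] := eqVneq (C a b) x.
  have Gax : G a x.
    rewrite -Cx G_to_center //; apply/negP; rewrite Cx => Fax.
    by rewrite (matched_partner_uniq Fax (_ : F a u)) ?eqxx // matched_sym in ux.
  have := reach_within_cat (reach_around_matched eua Fua)
    (reach_within_edge d Gax).
  apply: reach_within_le.
  have ba : b != a by rewrite eq_sym.
  have bu : b != u by rewrite eq_sym.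
  have := center_min eua bu ba; have := dtri u a b; have := dtri a b x.
  have := dsym b a; have := dsym b u.
  have := dge0 u a; have := dge0 a b; have := dge0 b x; lra.
have := reach_within_cat (reach_around_matched eua Fua)
  (reach_within_cons (G_of_base eab nFab) (reach_around_matched ebx Fbx)).
apply: reach_within_le.
have xa : x != a by rewrite eq_sym.
have xb : x != b by rewrite eq_sym.
have := center_min eua Cu Ca; have := center_min ebx Cb Cx.
have := center_min eab ua ub; have := center_min eab xa xb.
have := dtri u a (C a b); have := dtri (C a b) b x.
have := dtri u a b; have := dtri a b x.
have := dsym (C a b) a; have := dsym b (C a b); have := dsym a u;
have := dsym x b; have := dsym b a; have := dge0 u a; have := dge0 a b; have := dge0 b x; lra.
Qed.

Lemma reach_simple_path v s :
  path E' v s -> uniq (v :: s) -> ~~ single_matched_edge F v s ->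
  reach v (last v s) (3 * wlen d v s).
Proof.
have dge0 := metric_ge0 d_metric.
have [n] := ubnP (size s); elim: n => // n IH in v s *.
case: s => [_ _ _ _|v1 [|v2 s]] /=.
- by apply: reach_within_le (reach_within_refl _ _ _); rewrite /wlen big_nil mulr0.
- rewrite andbT => _ ev1 _ nFv1.
  apply: reach_within_le (reach_within_edge d (G_of_base ev1 nFv1)).
  by rewrite /wlen /= big_seq1 ler_peMl // ler1n.
rewrite ltnS => size_s /andP[ev1 p1] uniq_v _; have /andP[e12 p2] := p1.
have lt_s : (size s < n)%N by apply: ltn_trans size_s.
have [v_v1 v_v2 uniq_v1] : [/\ v != v1, v != v2 & uniq [:: v1, v2 & s]].
  by move: (uniq_v); rewrite /= !inE !negb_or => /andP[/and3P[-> -> _] ->].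
have [v1_v2 uniq_v2] : v1 != v2 /\ uniq (v2 :: s) by case/andP: uniq_v1 => /norP[? _].
rewrite !wlen_cons.
have [Fv1|nFv1] := boolP (F v v1).
  have nF12 : ~~ F v1 v2 by rewrite (matched_next_unmatched Fv1) // eq_sym.
  have [|nsingle] := boolP (single_matched_edge F v2 s).
    case: s {size_s lt_s uniq_v1 uniq_v2 p1} p2 uniq_v => [|v3 []] //= /andP[e23 _] uniq_v F23.
    apply: reach_within_le (reach_matched_unmatched_matched ev1 Fv1 e12 nF12 e23 F23 uniq_v).
    by rewrite wlen_cons /wlen big_nil; lra.
  have v2_v : v2 != v by rewrite eq_sym.
  have v2_v1 : v2 != v1 by rewrite eq_sym.
  have := reach_within_cat (reach_matched_unmatched ev1 Fv1 e12 nF12 v2_v v2_v1)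
    (IH v2 s lt_s p2 uniq_v2 nsingle).
  by apply: reach_within_le; lra.
have [|nsingle] := boolP (single_matched_edge F v1 (v2 :: s)).
  case: s {size_s lt_s uniq_v uniq_v1 uniq_v2 p1 p2} => [|//] /= F12.
  apply: reach_within_le (reach_unmatched_matched ev1 nFv1 e12 F12 v_v1 v_v2).
  by rewrite /wlen big_nil; lra.
have := reach_within_cons (G_of_base ev1 nFv1)
  (IH v1 (v2 :: s) size_s p1 uniq_v1 nsingle).
by apply: reach_within_le; rewrite wlen_cons; have := dge0 v v1; lra.
Qed.

End Detours.

Theorem lemma1 (R : realFieldType) (T : finType) (d : T -> T -> R) (t : R)
    (E' : rel T) (C : T -> T -> T) (F : rel T) (p q : T) (P' : seq T) :
  is_metric d -> (3 <= #|T|)%N -> 1 <= t ->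
  simple_graph E' -> is_spanner d E' t ->
  valid_choice d E' C ->
  matching_in (construct E' C) F ->
  shortest_path d E' p q P' ->
  walk_uses F p P' -> (2 <= size P')%N ->
  exists W : seq T, walk (remove_edges (construct E' C) F) p q W /\
    wlen d p W <= 3 * wlen d p P'.
Proof.
(* Of P' only its simplicity and its length >= 2 matter. *)
move=> d_metric _ _ _ _ C_valid F_matching [/andP[pathP /eqP lastP] uniqP _] _ sizeP.
have not_single : ~~ single_matched_edge F p P'.
  by case: P' {pathP lastP uniqP} sizeP => [|? []].
have [W walkW lenW] := reach_simple_path d_metric C_valid F_matching pathP uniqP not_single.
by exists W; rewrite -lastP.
Qed.
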